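(* Let $A$ be a commutative monoid which is a domain (if $A$ has no zero: $A$ is cancellative; if $A$ is a monoid with zero: $A\setminus\{0\}$ is a cancellative submonoid). Then every projective $A$-module is free.
   Context: If $A$ has no zero, an $A$-module is a set with a unital associative $A$-action; if $A$ has a zero, it is a pointed set with an action in which $0$ acts by sending everything to the base point, which is fixed. Free modules are coproducts (disjoint unions, resp. wedge sums) of copies of $A$. A module is projective if every surjection onto it has a section, equivalently if it is a retract of a free module. *)

From Stdlib Require Import ClassicalEpsilon.

Record cmonoid := CMonoid {
  mcarrier :> Type;
  mmul : mcarrier -> mcarrier -> mcarrier;
  mone : mcarrier;
  mmulA : forall a b c, mmul a (mmul b c) = mmul (mmul a b) c;
  mmulC : forall a b, mmul a b = mmul b a;
  mmul1 : forall a, mmul mone a = a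
}.

Definition cancellative (A : cmonoid) : Prop :=
  forall a b c : A, mmul A a b = mmul A a c -> b = c.

Record cmonoid0 := CMonoid0 {
  zcarrier :> Type;
  zmul : zcarrier -> zcarrier -> zcarrier;
  zone : zcarrier;
  zzero : zcarrier;
  zmulA : forall a b c, zmul a (zmul b c) = zmul (zmul a b) c;
  zmulC : forall a b, zmul a b = zmul b a;
  zmul1 : forall a, zmul zone a = a;
  zmul0 : forall a, zmul zzero a = zzero
}.

Definition domain0 (A : cmonoid0) : Prop :=
  zone A <> zzero A /\
  (forall a b : A, a <> zzero A -> b <> zzero A -> zmul A a b <> zzero A) /\
  (forall a b c : A, a <> zzero A -> b <> zzero A -> c <> zzero A ->
     zmul A a b = zmul A a c -> b = c).

(* ---------- Modules over a monoid without zero: A-sets ---------- *)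
Record mset (A : cmonoid) := MSet {
  scarrier :> Type;
  sact : A -> scarrier -> scarrier;
  sact1 : forall x, sact (mone A) x = x;
  sactM : forall a b x, sact (mmul A a b) x = sact a (sact b x)
}.
Arguments sact {A} _ _ _.

Definition equivariant {A : cmonoid} (X Y : mset A) (f : X -> Y) : Prop :=
  forall a x, f (sact X a x) = sact Y a (f x).

Definition projective {A : cmonoid} (X : mset A) : Prop :=
  forall (Y : mset A) (p : Y -> X), equivariant Y X p ->
    (forall x : X, exists y : Y, p y = x) ->
    exists s : X -> Y, equivariant X Y s /\ forall x, p (s x) = x.

(* Free module on I: the disjoint union of I copies of A, i.e. I * A with
   a . (i, b) = (i, a b).  X is free if it is isomorphic to such a module. *)
Definition free_act (A : cmonoid) (I : Type) (a : A) (p : I * A) : I * A :=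
  (fst p, mmul A a (snd p)).

Definition free {A : cmonoid} (X : mset A) : Prop :=
  exists (I : Type) (f : X -> I * A) (g : I * A -> X),
    (forall x, g (f x) = x) /\ (forall p, f (g p) = p) /\
    (forall a x, f (sact X a x) = free_act A I a (f x)) /\
    (forall a p, g (free_act A I a p) = sact X a (g p)).

(* ---------- Modules over a monoid with zero: pointed A-sets ---------- *)
Record pmset (A : cmonoid0) := PMSet {
  pcarrier :> Type;
  pact : A -> pcarrier -> pcarrier;
  pbase : pcarrier;
  pact1 : forall x, pact (zone A) x = x;
  pactM : forall a b x, pact (zmul A a b) x = pact a (pact b x);
  pact0 : forall x, pact (zzero A) x = pbase;
  pactb : forall a, pact a pbase = pbase
}.
Arguments pact {A} _ _ _.
Arguments pbase {A} _.

Definition pequivariant {A : cmonoid0} (X Y : pmset A) (f : X -> Y) : Prop :=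
  f (pbase X) = pbase Y /\ forall a x, f (pact X a x) = pact Y a (f x).

Definition pprojective {A : cmonoid0} (X : pmset A) : Prop :=
  forall (Y : pmset A) (p : Y -> X), pequivariant Y X p ->
    (forall x : X, exists y : Y, p y = x) ->
    exists s : X -> Y, pequivariant X Y s /\ forall x, p (s x) = x.

(* Free pointed module on I: the wedge sum of I copies of A, with carrier
   option (I * (A \ {0})): None is the base point, Some (i, b) is b in the
   i-th copy; a . (i, b) = (i, a b) if a b <> 0 and the base point otherwise. *)
Definition nz (A : cmonoid0) := { a : A | a <> zzero A }.

Definition pfree_act (A : cmonoid0) (I : Type) (a : A)
    (p : option (I * nz A)) : option (I * nz A) :=
  match p with
  | None => None
  | Some (i, b) =>
      match excluded_middle_informative (zmul A a (proj1_sig b) = zzero A) with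
      | left _ => None
      | right h => Some (i, exist _ (zmul A a (proj1_sig b)) h)
      end
  end.

Definition pfree {A : cmonoid0} (X : pmset A) : Prop :=
  exists (I : Type) (f : X -> option (I * nz A)) (g : option (I * nz A) -> X),
    (forall x, g (f x) = x) /\ (forall p, f (g p) = p) /\
    f (pbase X) = None /\ g None = pbase X /\
    (forall a x, f (pact X a x) = pfree_act A I a (f x)) /\
    (forall a p, g (pfree_act A I a p) = pact X a (g p)).

(** If [p : F -> X] is a module map from the free module on [I] with a
    section [s], write [s x = (i, c)].  Then [x = c . p (i, 1)], so
    [s x = c . s (p (i, 1))]; comparing first components, and cancelling [c]
    in the second, gives [s (p (i, 1)) = (i, 1)].  Hence the indices with
    this property form a basis and [s] identifies [X] with the free module on
    them.  Over a monoid with zero the same computation runs in the wedge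
    sum, where [c] and the coefficient of [s (p (i, 1))] are nonzero because
    their product is.  Projectivity supplies [s] for the evaluation map onto
    [X] from the free module on its underlying set. *)

From Stdlib Require Import ClassicalEpsilon ProofIrrelevance.

Lemma mmul1r (A : cmonoid) (a : A) : mmul A a (mone A) = a.
Proof. rewrite mmulC; apply mmul1. Qed.

Lemma zmul1r (A : cmonoid0) (a : A) : zmul A a (zone A) = a.
Proof. rewrite zmulC; apply zmul1. Qed.

Lemma zmul0r (A : cmonoid0) (a : A) : zmul A a (zzero A) = zzero A.
Proof. rewrite zmulC; apply zmul0. Qed.

Lemma free_act_unit (A : cmonoid) (I : Type) (c : A) (i : I) :
  free_act A I c (i, mone A) = (i, c).
Proof. unfold free_act; cbn; now rewrite mmul1r. Qed.

Definition free_mset (A : cmonoid) (I : Type) : mset A.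
Proof.
  refine (MSet A (I * A) (free_act A I) _ _).
  - intros [i b]; unfold free_act; cbn; now rewrite mmul1.
  - intros a b [i c]; unfold free_act; cbn; now rewrite mmulA.
Defined.

Definition free_eval {A : cmonoid} (X : mset A) (q : free_mset A X) : X :=
  sact X (snd q) (fst q).

Lemma free_eval_equivariant (A : cmonoid) (X : mset A) :
  equivariant (free_mset A X) X (free_eval X).
Proof. intros a [x b]; apply sactM. Qed.

Lemma free_eval_surjective (A : cmonoid) (X : mset A) :
  forall x : X, exists q, free_eval X q = x.
Proof. intro x; exists (x, mone A); apply sact1. Qed.

Section RetractOfFree.

Variables (A : cmonoid) (I : Type) (X : mset A).
Variables (p : free_mset A I -> X) (s : X -> free_mset A I).
Hypothesis A_cancellative : cancellative A.
Hypothesis p_equivariant : equivariant _ _ p.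
Hypothesis s_equivariant : equivariant _ _ s.
Hypothesis p_s : forall x, p (s x) = x.

Let basis := { i : I | s (p (i, mone A)) = (i, mone A) }.

Let incl (q : basis * A) : I * A := (proj1_sig (fst q), snd q).

Lemma p_pair_act (i : I) (c : A) : p (i, c) = sact X c (p (i, mone A)).
Proof. rewrite <- p_equivariant; cbn; now rewrite free_act_unit. Qed.

Lemma free_section_index_in_basis (x : X) :
  s (p (fst (s x), mone A)) = (fst (s x), mone A).
Proof.
  destruct (s x) as [i c] eqn:Esx; cbn.
  assert (x_eq : x = sact X c (p (i, mone A)))
    by now rewrite <- p_pair_act, <- Esx, p_s.
  rewrite x_eq, s_equivariant in Esx.
  destruct (s (p (i, mone A))) as [j d]; injection Esx as -> Ecd.
  f_equal; apply (A_cancellative c); now rewrite mmul1r.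
Qed.

Let coord (x : X) : basis * A :=
  (exist _ (fst (s x)) (free_section_index_in_basis x), snd (s x)).

Lemma free_incl_inj (q q' : basis * A) : incl q = incl q' -> q = q'.
Proof.
  destruct q as [[i hi] c], q' as [[j hj] d]; cbn; injection 1 as -> ->.
  f_equal; now apply subset_eq_compat.
Qed.

Lemma free_incl_coord (x : X) : incl (coord x) = s x.
Proof. symmetry; apply surjective_pairing. Qed.

Lemma free_section_on_basis (q : basis * A) : s (p (incl q)) = incl q.
Proof.
  destruct q as [[i hi] c]; change (s (p (i, c)) = (i, c)).
  rewrite p_pair_act, s_equivariant, hi.
  apply free_act_unit.
Qed.

Lemma retract_of_free_is_free : free X.
Proof.
  exists basis, coord, (fun q => p (incl q)).
  split; [|split; [|split]].
  - intro x; now rewrite free_incl_coord.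
  - intro q; apply free_incl_inj.
    now rewrite free_incl_coord, free_section_on_basis.
  - intros a x; apply free_incl_inj; rewrite !free_incl_coord.
    rewrite s_equivariant, <- free_incl_coord; reflexivity.
  - intros a q; apply (p_equivariant a (incl q)).
Qed.

End RetractOfFree.

Lemma pfree_act_nz (A : cmonoid0) (I : Type) (a : A) (i : I) (b c : nz A) :
  proj1_sig c = zmul A a (proj1_sig b) ->
  pfree_act A I a (Some (i, b)) = Some (i, c).
Proof.
  destruct c as [c c_nz]; cbn; intros ->.
  destruct excluded_middle_informative; [contradiction|].
  do 2 f_equal; now apply subset_eq_compat.
Qed.

Lemma pfree_act_zero (A : cmonoid0) (I : Type) (a : A) (i : I) (b : nz A) :
  zmul A a (proj1_sig b) = zzero A -> pfree_act A I a (Some (i, b)) = None.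
Proof. cbn; now destruct excluded_middle_informative. Qed.

Lemma pfree_act_eq_Some (A : cmonoid0) (I : Type) (a : A) q (i : I) (c : nz A) :
  pfree_act A I a q = Some (i, c) ->
  exists b, q = Some (i, b) /\ proj1_sig c = zmul A a (proj1_sig b).
Proof.
  destruct q as [[j b]|]; cbn; [|discriminate].
  destruct excluded_middle_informative; [discriminate|].
  injection 1 as -> <-; now exists b.
Qed.

Lemma pfree_act_map (A : cmonoid0) (I J : Type) (f : I -> J) (a : A) q :
  pfree_act A J a (option_map (fun ib => (f (fst ib), snd ib)) q)
  = option_map (fun ib => (f (fst ib), snd ib)) (pfree_act A I a q).
Proof.
  destruct q as [[i b]|]; [|reflexivity]; cbn.
  now destruct excluded_middle_informative.
Qed.

Definition wedge_pmset (A : cmonoid0) (I : Type) : pmset A.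
Proof.
  refine (PMSet A (option (I * nz A)) (pfree_act A I) None _ _ _ _).
  - intros [[i b]|]; [|reflexivity].
    apply pfree_act_nz; symmetry; apply zmul1.
  - intros a b [[i c]|]; [|reflexivity].
    destruct (excluded_middle_informative (zmul A b (proj1_sig c) = zzero A))
      as [bc_0|bc_nz].
    + rewrite (pfree_act_zero _ _ _ _ _ bc_0), pfree_act_zero; [reflexivity|].
      now rewrite <- zmulA, bc_0, zmul0r.
    + rewrite (pfree_act_nz _ _ _ _ _
                 (exist (fun c => c <> zzero A) _ bc_nz) eq_refl).
      destruct (excluded_middle_informative
                  (zmul A a (zmul A b (proj1_sig c)) = zzero A))
        as [abc_0|abc_nz].
      * rewrite !pfree_act_zero; [reflexivity|assumption|].
        now rewrite <- zmulA.
      * rewrite !(pfree_act_nz _ _ _ _ _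
                    (exist (fun c => c <> zzero A) _ abc_nz));
          cbn; [reflexivity..|apply zmulA].
  - intros [[i b]|]; [|reflexivity]; apply pfree_act_zero, zmul0.
  - reflexivity.
Defined.

Definition wedge_eval {A : cmonoid0} (X : pmset A) (q : wedge_pmset A X) : X :=
  match q with None => pbase X | Some (x, b) => pact X (proj1_sig b) x end.

Lemma wedge_eval_pequivariant (A : cmonoid0) (X : pmset A) :
  pequivariant (wedge_pmset A X) X (wedge_eval X).
Proof.
  split; [reflexivity|].
  intros a [[x b]|]; cbn - [pfree_act]; [|symmetry; apply pactb].
  destruct (excluded_middle_informative (zmul A a (proj1_sig b) = zzero A))
    as [ab_0|ab_nz].
  - now rewrite (pfree_act_zero _ _ _ _ _ ab_0), <- pactM, ab_0, pact0.
  - rewrite (pfree_act_nz _ _ _ _ _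
               (exist (fun c => c <> zzero A) _ ab_nz) eq_refl).
    apply pactM.
Qed.

Lemma wedge_eval_surjective (A : cmonoid0) (X : pmset A) :
  zone A <> zzero A -> forall x : X, exists q, wedge_eval X q = x.
Proof.
  intros one_neq0 x; exists (Some (x, exist _ (zone A) one_neq0)).
  apply pact1.
Qed.

Section RetractOfWedge.

Variables (A : cmonoid0) (I : Type) (X : pmset A).
Variables (p : wedge_pmset A I -> X) (s : X -> wedge_pmset A I).
Hypothesis A_domain : domain0 A.
Hypothesis p_pequivariant : pequivariant _ _ p.
Hypothesis s_pequivariant : pequivariant _ _ s.
Hypothesis p_s : forall x, p (s x) = x.

Let one_nz : nz A := exist _ (zone A) (proj1 A_domain).

Lemma pfree_act_one_nz (i : I) (b : nz A) :
  pfree_act A I (proj1_sig b) (Some (i, one_nz)) = Some (i, b).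
Proof. apply pfree_act_nz; symmetry; apply zmul1r. Qed.

Lemma p_Some_act (i : I) (b : nz A) :
  p (Some (i, b)) = pact X (proj1_sig b) (p (Some (i, one_nz))).
Proof.
  rewrite <- (proj2 p_pequivariant); cbn - [pfree_act].
  now rewrite pfree_act_one_nz.
Qed.

Let basis := { i : I | s (p (Some (i, one_nz))) = Some (i, one_nz) }.

Let incl : option (basis * nz A) -> option (I * nz A) :=
  option_map (fun ib => (proj1_sig (fst ib), snd ib)).

Lemma wedge_section_index_in_basis (x : X) (i : I) (b : nz A) :
  s x = Some (i, b) -> s (p (Some (i, one_nz))) = Some (i, one_nz).
Proof.
  intro Esx.
  assert (x_eq : x = pact X (proj1_sig b) (p (Some (i, one_nz))))
    by now rewrite <- p_Some_act, <- Esx, p_s.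
  rewrite x_eq, (proj2 s_pequivariant) in Esx.
  destruct (pfree_act_eq_Some _ _ _ _ _ _ Esx) as ([d d_nz] & Ed & b_eq).
  rewrite Ed; do 2 f_equal; apply subset_eq_compat; cbn in b_eq.
  pose proof A_domain as (one_neq0 & _ & cancel).
  apply (cancel (proj1_sig b)); try easy; [apply proj2_sig|].
  now rewrite zmul1r.
Qed.

Let coord (x : X) : option (basis * nz A) :=
  match s x with
  | None => None
  | Some (i, b) =>
      match excluded_middle_informative
              (s (p (Some (i, one_nz))) = Some (i, one_nz)) with
      | left h => Some (exist _ i h, b)
      | right _ => None (* unreachable by [wedge_section_index_in_basis] *)
      end
  end.

Lemma wedge_incl_inj (q q' : option (basis * nz A)) :
  incl q = incl q' -> q = q'.
Proof.
  destruct q as [[[i hi] c]|], q' as [[[j hj] d]|]; cbn; try discriminate;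
    [|reflexivity].
  injection 1 as -> ->; do 2 f_equal; now apply subset_eq_compat.
Qed.

Lemma wedge_incl_coord (x : X) : incl (coord x) = s x.
Proof.
  unfold coord; destruct (s x) as [[i b]|] eqn:Esx; [|reflexivity].
  destruct excluded_middle_informative as [|not_basis]; [reflexivity|].
  contradiction (not_basis (wedge_section_index_in_basis x i b Esx)).
Qed.

Lemma wedge_section_on_basis (q : option (basis * nz A)) :
  s (p (incl q)) = incl q.
Proof.
  destruct q as [[[i hi] b]|]; cbn.
  - rewrite p_Some_act, (proj2 s_pequivariant), hi; apply pfree_act_one_nz.
  - change (s (p (pbase _)) = pbase _).
    rewrite (proj1 p_pequivariant); apply s_pequivariant.
Qed.

Lemma retract_of_wedge_is_pfree : pfree X.
Proof.
  exists basis, coord, (fun q => p (incl q)).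
  split; [|split; [|split; [|split; [|split]]]].
  - intro x; now rewrite wedge_incl_coord.
  - intro q; apply wedge_incl_inj.
    now rewrite wedge_incl_coord, wedge_section_on_basis.
  - apply wedge_incl_inj; rewrite wedge_incl_coord; apply s_pequivariant.
  - apply p_pequivariant.
  - intros a x; apply wedge_incl_inj.
    rewrite wedge_incl_coord, (proj2 s_pequivariant), <- wedge_incl_coord.
    apply pfree_act_map.
  - intros a q; rewrite <- (proj2 p_pequivariant); f_equal.
    symmetry; apply pfree_act_map.
Qed.

End RetractOfWedge.

Theorem mainTheorem4 :
  (forall (A : cmonoid), cancellative A ->
     forall X : mset A, projective X -> free X) /\
  (forall (A : cmonoid0), domain0 A ->
     forall X : pmset A, pprojective X -> pfree X).
Proof.
  split.
  - intros A A_cancellative X X_projective.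
    destruct (X_projective _ _ (free_eval_equivariant A X)
                (free_eval_surjective A X)) as (s & s_equivariant & p_s).
    exact (retract_of_free_is_free A X X _ s A_cancellative
             (free_eval_equivariant A X) s_equivariant p_s).
  - intros A A_domain X X_projective.
    destruct (X_projective _ _ (wedge_eval_pequivariant A X)
                (wedge_eval_surjective A X (proj1 A_domain)))
      as (s & s_pequivariant & p_s).
    exact (retract_of_wedge_is_pfree A X X _ s A_domain
             (wedge_eval_pequivariant A X) s_pequivariant p_s).
Qed.
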